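(* Let $(X,\|\cdot\|)$ be a Banach space, $B_X=\{x\in X:\|x\|\le1\}$ and $B=\{x\in X:\|x\|\ge2\}$. If the ordered pair $(B_X,B)$ has the $UC$ property, then $(X,\|\cdot\|)$ is a uniformly convex Banach space.
   Context: $\mathrm{dist}(A,B)=\inf\{\|a-b\|:a\in A,b\in B\}$. The ordered pair $(A,B)$ has the $UC$ property if for all sequences $\{x_n\},\{z_n\}\subset A$, $\{y_n\}\subset B$ with $\lim_n\|x_n-y_n\|=\lim_n\|z_n-y_n\|=\mathrm{dist}(A,B)$ one has $\lim_n\|x_n-z_n\|=0$. $X$ is uniformly convex if for every $\varepsilon\in(0,2]$, $\delta(\varepsilon)=\inf\{1-\|\frac{x+y}{2}\|: x,y\in B_X,\ \|x-y\|\ge\varepsilon\}>0$. *)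

From HB Require Import structures.
From mathcomp Require Import all_boot all_order all_algebra.
From mathcomp Require Import all_classical all_reals all_analysis.
Set Implicit Arguments. Unset Strict Implicit. Unset Printing Implicit Defensive.
Import Order.TTheory GRing.Theory Num.Theory.
Import numFieldNormedType.Exports.
Local Open Scope classical_set_scope.
Local Open Scope ring_scope.

Definition setdist {R : realType} {X : normedModType R} (A B : set X) : R :=
  inf [set `|a - b| | a in A & b in B].

Definition UC_property {R : realType} {X : normedModType R} (A B : set X) : Prop :=
  forall (x z y : nat -> X),
    (forall n, A (x n)) -> (forall n, A (z n)) -> (forall n, B (y n)) ->
    (fun n => `|x n - y n|) @ \oo --> setdist A B ->
    (fun n => `|z n - y n|) @ \oo --> setdist A B ->
    (fun n => `|x n - z n|) @ \oo --> (0 : R).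

Definition unit_ball {R : realType} {X : normedModType R} : set X :=
  [set x | `|x| <= 1].

(* modulus of convexity, as an extended real (inf of the empty set = +oo) *)
Definition modulus_convexity {R : realType} {X : normedModType R} (eps : R) : \bar R :=
  ereal_inf [set ((1 - `|2^-1 *: (p.1 + p.2)|)%:E) |
               p in [set p : X * X | `|p.1| <= 1 /\ `|p.2| <= 1 /\ eps <= `|p.1 - p.2|]].

Definition uniformly_convex {R : realType} (X : normedModType R) : Prop :=
  forall eps : R, 0 < eps <= 2 -> (0 < modulus_convexity (X := X) eps)%E.

From HB Require Import structures.
From mathcomp Require Import all_boot all_order all_algebra.
From mathcomp Require Import all_classical all_reals all_analysis.
From mathcomp Require Import lra.
Set Implicit Arguments. Unset Strict Implicit. Unset Printing Implicit Defensive.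
Import Order.TTheory GRing.Theory Num.Theory.
Import numFieldNormedType.Exports.
Local Open Scope classical_set_scope.
Local Open Scope ring_scope.

(* Write S for the shell {x | |x| >= 2}.  By the reverse triangle inequality
   every point of B_X is at distance >= 1 from S, and a unit vector v and 2v
   realise distance 1, so dist(B_X, S) = 1 in any nontrivial space.
   If the modulus of convexity vanishes at some eps > 0, we get x_n, z_n in B_X
   with |x_n - z_n| >= eps and |x_n + z_n| -> 2.  Rescaling the midpoint onto
   the sphere of radius 2, y_n = 2 (x_n + z_n) / |x_n + z_n|, a direct norm
   estimate gives 1 <= |x_n - y_n|, |z_n - y_n| <= 1 + 2 (2 - |x_n + z_n|),
   so both distances tend to dist(B_X, S) = 1.  The UC property then forces
   |x_n - z_n| -> 0, contradicting |x_n - z_n| >= eps. *)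

Section UnitBallAndShell.
Variables (R : realType) (X : normedModType R).

Let shell : set X := [set x | 2 <= `|x|].

Lemma unit_ball_shell_dist_ge1 (a b : X) :
  `|a| <= 1 -> 2 <= `|b| -> 1 <= `|a - b|.
Proof.
move=> a1 b2; rewrite distrC (le_trans _ (lerB_dist _ _)) //; lra.
Qed.

(* In a nontrivial space, dist(B_X, S) = 1, attained at (v/|v|, 2v/|v|). *)
Lemma setdist_unit_ball_shell (v : X) :
  v != 0 -> setdist (unit_ball (X := X)) shell = 1.
Proof.
move=> v0; set u := `|v|^-1 *: v.
have nu : `|u| = 1 by rewrite /u normrZ normrV ?unitfE ?normr_eq0 //
  ger0_norm // mulVf // normr_eq0.
have u_ball : unit_ball u by rewrite /unit_ball /= nu.
have u2_shell : shell (2 *: u) by rewrite /shell /= normrZ nu mulr1 ger0_norm.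
have dist_u : `|u - 2 *: u| = 1.
  by rewrite scaler_nat mulr2n opprD addrA subrr add0r normrN nu.
apply/eqP; rewrite eq_le; apply/andP; split.
- rewrite -dist_u; apply: ge_inf; last by exists u => //; exists (2 *: u).
  by exists 0 => _ [a _ [b _ <-]]; rewrite normr_ge0.
- apply: lb_le_inf; first by exists `|u - 2 *: u|, u => //; exists (2 *: u).
  by move=> _ [a a1 [b b2 <-]]; exact: unit_ball_shell_dist_ge1.
Qed.

End UnitBallAndShell.

Lemma norm_rescale (R : numFieldType) (X : normedModType R) (r : R) (v : X) :
  0 <= r -> v != 0 -> `|(r / `|v|) *: v| = r.
Proof.
by move=> r0 v0; rewrite normrZ ger0_norm ?divr_ge0 // mulfVK // normr_eq0.
Qed.

Lemma sub_scale_sum (R : pzRingType) (V : lmodType R) (c : R) (x z : V) :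
  x - c *: (x + z) = - ((c - 1) *: x + c *: z).
Proof. by rewrite scalerDr scalerBl scale1r opprD [RHS]opprD opprB addrA. Qed.

Lemma rescaled_sum_dist_le (R : realFieldType) (X : normedModType R) (x z : X) :
  `|x| <= 1 -> `|z| <= 1 -> 1 <= `|x + z| ->
  `|x - (2 / `|x + z|) *: (x + z)| <= 1 + 2 * (2 - `|x + z|).
Proof.
move=> x1 z1; set s := `|x + z| => s1.
have s0 : 0 < s by lra.
have s2 : s <= 2 by rewrite /s (le_trans (ler_normD _ _)) //; lra.
set c := 2 / s.
have c1 : 1 <= c by rewrite /c ler_pdivlMr // mul1r.
have cs : c * s = 2 by rewrite /c mulfVK // gt_eqF.
have c_le : c <= 3 - s.
  rewrite -(ler_pM2r s0) mulrBl cs; have : 0 <= (s - 1) * (2 - s) by nra.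
  lra.
rewrite sub_scale_sum normrN (le_trans (ler_normD _ _)) // !normrZ.
rewrite !ger0_norm ?subr_ge0 ?divr_ge0 ?invr_ge0 ?(ltW s0) // -/c.
have := normr_ge0 x; have := normr_ge0 z; nra.
Qed.

Lemma squeeze_to_one (R : realType) (u : nat -> R) :
  (forall n, 1 <= u n <= 1 + 2 * (n.+1%:R)^-1) -> u @ \oo --> (1 : R).
Proof.
move=> bnd; apply: (squeeze_cvgr (f := fun=> 1)); last 2 first.
- exact: cvg_cst.
- rewrite -[X in _ --> X]addr0; apply: cvgD; first exact: cvg_cst.
  by rewrite -(mulr0 2); apply: cvgMr; exact: cvg_harmonic.
by apply: nearW => n; exact: bnd.
Qed.

Lemma modulus_convexity_zero_pairs (R : realType) (X : normedModType R) (eps r : R) :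
  ~ (0 < modulus_convexity (X := X) eps)%E -> 0 < r ->
  exists x z : X, [/\ `|x| <= 1, `|z| <= 1, eps <= `|x - z| & 2 - r < `|x + z|].
Proof.
move=> /negP; rewrite -leNgt => m0 r0.
have : (modulus_convexity (X := X) eps < (r / 2)%:E)%E.
  by apply: le_lt_trans m0 _; rewrite lte_fin divr_gt0.
move=> /ereal_inf_lt [_ [[x z] [/= x1 [z1 sep]] <-]]; rewrite lte_fin => mid.
exists x, z; split => //.
by move: mid; rewrite normrZ ger0_norm //; lra.
Qed.

Lemma rescaled_sum_dist_cvg (R : realType) (X : normedModType R) (x z : nat -> X) :
  (forall n, `|x n| <= 1) -> (forall n, `|z n| <= 1) ->
  (forall n, 2 - (n.+1%:R)^-1 < `|x n + z n|) ->
  (fun n => `|x n - (2 / `|x n + z n|) *: (x n + z n)|) @ \oo --> (1 : R).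
Proof.
move=> x1 z1 near2; apply: squeeze_to_one => n.
have := near2 n; set h := (n.+1%:R)^-1 => near2n.
have h1 : h <= 1 by rewrite invf_le1 ?ler1n.
have s1 : 1 <= `|x n + z n| by lra.
apply/andP; split.
- apply: unit_ball_shell_dist_ge1 => //.
  by rewrite norm_rescale // -normr_gt0; lra.
- by apply: (le_trans (rescaled_sum_dist_le (x1 n) (z1 n) s1)); lra.
Qed.

Theorem theorem44 (R : realType) (X : completeNormedModType R) :
  UC_property (unit_ball (X := X)) [set x : X | `|x| >= 2] ->
  uniformly_convex X.
Proof.
move=> HUC eps /andP[eps0 _]; apply: contrapT => not_uc.
have /choice [x /choice [z Hxz]] : forall n, exists x z : X,
    [/\ `|x| <= 1, `|z| <= 1, eps <= `|x - z| & 2 - (n.+1%:R)^-1 < `|x + z|].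
  by move=> n; apply: modulus_convexity_zero_pairs; rewrite // invr_gt0 ltr0n.
have x1 n : `|x n| <= 1 by case: (Hxz n).
have z1 n : `|z n| <= 1 by case: (Hxz n).
have near2 n : 2 - (n.+1%:R)^-1 < `|x n + z n| by case: (Hxz n).
pose y n := (2 / `|x n + z n|) *: (x n + z n).
have y_shell n : 2 <= `|y n|.
  rewrite norm_rescale // -normr_gt0; apply: le_lt_trans (near2 n).
  by rewrite subr_ge0; apply: (@le_trans _ _ 1); rewrite ?invf_le1 ?ler1n.
have dist1 : setdist (unit_ball (X := X)) [set w : X | `|w| >= 2] = 1.
  apply: (setdist_unit_ball_shell (v := x 0 - z 0)).
  by rewrite -normr_gt0; apply: lt_le_trans eps0 _; case: (Hxz 0).
have Hx : (fun n => `|x n - y n|) @ \oo --> (1 : R) := rescaled_sum_dist_cvg x1 z1 near2.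
have Hz : (fun n => `|z n - y n|) @ \oo --> (1 : R).
  have yC n : y n = (2 / `|z n + x n|) *: (z n + x n) by rewrite /y addrC.
  under eq_fun do rewrite yC.
  by apply: (rescaled_sum_dist_cvg z1 x1) => n; rewrite (addrC (z n)).
have := HUC x z y x1 z1 y_shell; rewrite dist1 => /(_ Hx Hz) /cvgr_lt /(_ eps eps0).
by move=> [N _ /(_ N (leqnn N))]; case: (Hxz N) => _ _ sep _ /=; lra.
Qed.
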